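(* For every composition $p=(p_1,\ldots,p_\ell)$ of positive integers, let $B_p 1=B_{p_1}B_{p_2}\cdots B_{p_\ell}\,1$. Then $$B_p1\Big|_{q\to 1+q}\;=\;\sum_{\mu\vdash |p|} P_\mu(q)\,e_\mu[X]$$ for some polynomials $P_\mu(q)$ with nonnegative integer coefficients. Here $|p|=p_1+\cdots+p_\ell$.
   Context: For an integer $a\ge1$, the modified Hall–Littlewood operator $B_a$ acts on symmetric functions $F[X]$ (with coefficients in $\mathbb{Q}[q]$) by $$B_aF[X]=F\Big[X+\epsilon\frac{1-q}{z}\Big]\sum_{r\ge0}z^re_r[X]\Big|_{z^a},$$ where $|_{z^a}$ denotes taking the coefficient of $z^a$. The brackets denote plethystic substitution, and $\epsilon$ is the plethystic variable with $p_k[\epsilon]=(-1)^k$. Thus $p_k[X+\epsilon\frac{1-q}{z}]=p_k[X]+(-1)^k\frac{1-q^k}{z^k}$. Equivalently, $$B_a=\sum_{r,s\ge0}(-1)^sq^r\,e_{a+r+s}\,e_r^\perp h_s^\perp,$$ where $e_{a+r+s}$ acts by multiplication and $f^\perp$ is the adjoint of multiplication by $f$ under the Hall scalar product. The notation $|_{q\to 1+q}$ means substituting $1+q$ for $q$. *)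

From HB Require Import structures.
From mathcomp Require Import all_boot all_order all_algebra.
From mathcomp Require Import mpoly.
Set Implicit Arguments. Unset Strict Implicit. Unset Printing Implicit Defensive.
Import Order.TTheory GRing.Theory Num.Theory.
Local Open Scope ring_scope.

(* Model of (the degree <= N part of) the ring of symmetric functions Lambda
   with coefficients in Q[q]:  Lambda_Q[q] = Q[q][p_1, p_2, ...] (power sums
   are algebraically independent generators).  We keep p_1..p_N, variable
   'X_i standing for p_(i+1); p_k for k > N is set to 0.  All computations in
   the theorem stay in degree <= N = |p|, where this truncation is an
   isomorphism. *)
Definition Rq := {poly rat}.
Definition Sym (N : nat) := {mpoly Rq[N]}.

Definition psum (N k : nat) : Sym N :=
  if k is k'.+1 then
    (if insub k' is Some i then 'X_i else 0)
  else 1.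

(* elementary symmetric functions via Newton's identities:
   r e_r = sum_{i=1}^r (-1)^(i-1) e_(r-i) p_i,   e_0 = 1.
   elist N r = [:: e_0; ...; e_r]. *)
Fixpoint elist (N r : nat) : seq (Sym N) :=
  match r with
  | 0 => [:: 1]
  | r'.+1 =>
      let l := elist N r' in
      rcons l ((((r'.+1)%:R : rat)^-1)%:P *:
        \sum_(i < r'.+1) ((-1) ^+ i * nth 0 l (r' - i) * psum N i.+1))
  end.

Definition esym (N r : nat) : Sym N := nth 0 (elist N r) r.

Definition emon (N : nat) (mu : seq nat) : Sym N := \prod_(k <- mu) esym N k.

(* The plethystic substitution F |-> F[X + eps (1-q)/w], with w = 1/z, as a
   polynomial in w with coefficients in Sym N:
   p_k |-> p_k + (-1)^k (1 - q^k) w^k. *)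
Definition pleth_shift (N : nat) (F : Sym N) : {poly Sym N} :=
  mmap (fun c : Rq => (c%:MP : Sym N)%:P)
       (fun i : 'I_N =>
          ('X_i : Sym N)%:P
          + ((((-1) ^+ i.+1 * (1 - 'X ^+ i.+1)) : Rq)%:MP : Sym N) *: 'X ^+ i.+1)
       F.

(* B_a F = F[X + eps (1-q)/z] * sum_r z^r e_r[X] |_{z^a}
         = sum_j (coeff of z^(-j) in F[...]) * e_(a+j). *)
Definition Bop (N a : nat) (F : Sym N) : Sym N :=
  let G := pleth_shift F in
  \sum_(j < size G) G`_j * esym N (a + j).

Definition Bcomp (N : nat) (p : seq nat) : Sym N := foldr (@Bop N) 1 p.

Definition shift_q (N : nat) (F : Sym N) : Sym N :=
  map_mpoly (fun c : Rq => c \Po ('X + 1)) F.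

Definition is_partition (n : nat) (mu : seq nat) : bool :=
  [&& sumn mu == n, sorted (fun a b : nat => (b <= a)%N) mu & all (fun x : nat => (0 < x)%N) mu].

Definition nonneg_poly (P : {poly int}) : Prop := forall i, 0 <= P`_i.

From Pilot Require Import Defs.
From HB Require Import structures.
From mathcomp Require Import all_boot all_order all_algebra.
From mathcomp Require Import mpoly.
From mathcomp Require Import ring zify.
Import Order.TTheory GRing.Theory Num.Theory.
Set Implicit Arguments. Unset Strict Implicit. Unset Printing Implicit Defensive.
Local Open Scope ring_scope.

(* The shift F |-> F[X + eps (1-q)/z] is a ring morphism sending p_k to p_k + p_k[alpha] w^k,
   where alpha = eps (1-q) and w = 1/z.  Newton's identities determine e_k from the power sums
   and are additive under convolution, so the shift sends e_k to sum_m e_(k-m) e_m[alpha] w^m,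
   with e_m[alpha] = (q-1) q^(m-1) for m > 0, which becomes q (1+q)^(m-1) under q -> 1+q.
   Hence B_a maps c e_nu to a sum of terms c c' e_lambda with c' a product of such e_m[alpha],
   and by induction B_p 1 is a sum of e_lambda whose coefficients lie in N[q] after q -> 1+q,
   a substitution that fixes every e_lambda. *)

Section Newton.
Variable R : pzRingType.
Implicit Types p a b : nat -> R.

Definition euler_op a n : R := n%:R * a n.

Lemma euler_op0 a : euler_op a 0 = 0.
Proof. exact: mul0r. Qed.

Definition newton p a : Prop :=
  forall n, euler_op a n.+1 = \sum_(i < n.+1) (-1) ^+ i * a (n - i)%N * p i.+1.

Lemma newton_uniq p p' a b K :
  (forall n, GRing.lreg (n.+1%:R : R)) -> (forall i, (0 < i <= K)%N -> p i = p' i) ->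
  newton p a -> newton p' b -> a 0 = b 0 -> forall n, (n <= K)%N -> a n = b n.
Proof.
move=> reg pp' Na Nb ab0; elim/ltn_ind => -[|n] IH leK //.
apply: (reg n); move: (Na n) (Nb n); rewrite /euler_op => -> ->.
apply: eq_bigr => i _; have lt_in := ltn_ord i.
rewrite IH ?pp' //; lia.
Qed.

End Newton.
Lemma newton_rmorph (R S : pzRingType) (f : {rmorphism R -> S}) (p a : nat -> R) :
  newton p a -> newton (f \o p) (f \o a).
Proof.
move=> Na n; rewrite /euler_op /= -(rmorph_nat f) -rmorphM [_ * _]Na rmorph_sum.
by apply: eq_bigr => i _; rewrite !rmorphM rmorphXn rmorphN1.
Qed.

Lemma sum_triangle (V : nmodType) n (f : nat -> nat -> V) :
  \sum_(i < n.+1) \sum_(m < (n - i)%N.+1) f i m =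
  \sum_(m < n.+1) \sum_(i < (n - m)%N.+1) f i m.
Proof.
have cut k (g : nat -> V) : (k <= n)%N ->
    \sum_(m < (n - k)%N.+1) g m = \sum_(m < n.+1) if (k + m <= n)%N then g m else 0.
  move=> le_kn; rewrite (big_ord_widen n.+1 g) ?ltnS ?leq_subr // big_mkcond.
  by apply: eq_bigr => m _; rewrite ltnS leq_subRL.
under eq_bigr => i _ do rewrite (cut i (f i) (ltn_ord i)).
rewrite exchange_big /=; apply: eq_bigr => m _.
by rewrite (cut m (f^~ m) (ltn_ord m)); apply: eq_bigr => i _; rewrite addnC.
Qed.

Section Convolution.
Variable R : comPzRingType.
Implicit Types p a b : nat -> R.

Definition conv a b n : R := \sum_(m < n.+1) a (n - m)%N * b m.

Lemma conv_sym a b n : conv a b n = conv b a n.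
Proof.
rewrite /conv (reindex_inj rev_ord_inj) /=; apply: eq_bigr => m _.
by rewrite subKn ?leq_ord // mulrC.
Qed.

Lemma euler_conv a b n :
  euler_op (conv a b) n = conv (euler_op a) b n + conv a (euler_op b) n.
Proof.
rewrite /euler_op /conv mulr_sumr -big_split; apply: eq_bigr => m _ /=.
rewrite -{1}(subnK (leq_ord m)) natrD; ring.
Qed.

Lemma newton_convl p a b : newton p a -> forall n,
  \sum_(i < n.+1) (-1) ^+ i * conv a b (n - i)%N * p i.+1 =
  conv (euler_op a) b n.+1.
Proof.
move=> Na n; rewrite [RHS]/conv [RHS]big_ord_recr /= subnn euler_op0 mul0r addr0.
under [RHS]eq_bigr => m _ do rewrite subSn ?leq_ord // Na mulr_suml.
under eq_bigr do rewrite mulr_sumr mulr_suml.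
rewrite (sum_triangle n (fun i m => (-1) ^+ i * (a (n - i - m)%N * b m) * p i.+1)).
apply: eq_bigr => m _; apply: eq_bigr => i _.
by rewrite subnAC; ring.
Qed.

Lemma newton_conv p p' a b :
  newton p a -> newton p' b -> newton (fun i => p i + p' i) (conv a b).
Proof.
move=> Na Nb n; rewrite euler_conv.
under eq_bigr do rewrite mulrDr.
rewrite big_split /= newton_convl //; congr (_ + _).
under eq_bigr do rewrite conv_sym.
by rewrite newton_convl // conv_sym.
Qed.

Lemma newton_scale p a (w : R) :
  newton p a -> newton (fun i => p i * w ^+ i) (fun n => a n * w ^+ n).
Proof.
move=> Na n; rewrite /euler_op mulrA -/(euler_op a n.+1) Na mulr_suml.
apply: eq_bigr => i _.
have -> : w ^+ n.+1 = w ^+ (n - i) * w ^+ i.+1 by rewrite -exprD addnS subnK ?leq_ord.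
ring.
Qed.

End Convolution.

(* p_j and e_m of the alphabet alpha = eps (1-q). *)
Definition palpha (j : nat) : Rq := (-1) ^+ j * (1 - 'X ^+ j).

Definition ealpha (m : nat) : Rq := if m is m'.+1 then ('X - 1) * 'X ^+ m' else 1.

Lemma sign_palpha i : (-1) ^+ i * palpha i.+1 = 'X ^+ i.+1 - 1.
Proof.
by rewrite /palpha mulrA -exprD addnS -signr_odd /= oddD addbb expr1 mulN1r opprB.
Qed.

Lemma ealpha_newton : newton palpha ealpha.
Proof.
move=> n; rewrite /euler_op big_ord_recr /= subnn mulrAC sign_palpha mulr1.
have -> : \sum_(i < n) (-1) ^+ i * ealpha (n - i) * palpha i.+1 =
    ('X - 1) * \sum_(i < n) ('X ^+ n - 'X ^+ (n.-1 - i)).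
  rewrite mulr_sumr; apply: eq_bigr => i _.
  rewrite mulrAC sign_palpha.
  have -> : (n - i = (n.-1 - i).+1)%N by have := ltn_ord i; lia.
  have -> : 'X ^+ n = 'X ^+ i.+1 * 'X ^+ (n.-1 - i) :> Rq.
    by rewrite -exprD; congr (_ ^+ _); have := ltn_ord i; lia.
  by rewrite /=; ring.
rewrite sumrB sumr_const card_ord.
have := subrXX ('X : Rq) 1 n; under eq_bigr do rewrite expr1n mulr1.
rewrite expr1n mulrBr => <-; rewrite exprS -mulr_natr; ring.
Qed.

Lemma nonneg_poly1 : nonneg_poly 1.
Proof. by move=> i; rewrite coef1; case: (i == 0%N). Qed.

Lemma nonneg_polyX : nonneg_poly 'X.
Proof. by move=> i; rewrite coefX; case: (i == 1%N). Qed.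

Lemma nonneg_polyD P Q : nonneg_poly P -> nonneg_poly Q -> nonneg_poly (P + Q).
Proof. by move=> hP hQ i; rewrite coefD addr_ge0. Qed.

Lemma nonneg_polyM P Q : nonneg_poly P -> nonneg_poly Q -> nonneg_poly (P * Q).
Proof. by move=> hP hQ i; rewrite coefM; apply: sumr_ge0 => j _; apply: mulr_ge0. Qed.

Definition shift_nonneg (c : Rq) : Prop :=
  exists2 P : {poly int}, nonneg_poly P & c \Po ('X + 1) = map_poly intr P.

Lemma shift_nonneg1 : shift_nonneg 1.
Proof. by exists 1; [exact: nonneg_poly1 | rewrite comp_polyC !rmorph1]. Qed.

Lemma shift_nonnegM a b : shift_nonneg a -> shift_nonneg b -> shift_nonneg (a * b).
Proof.
move=> [P hP eP] [Q hQ eQ]; exists (P * Q); first exact: nonneg_polyM.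
by rewrite comp_polyM eP eQ rmorphM.
Qed.

Lemma shift_nonneg_ealpha m : shift_nonneg (ealpha m).
Proof.
case: m => [|m] /=; first exact: shift_nonneg1.
apply: shift_nonnegM.
  exists 'X; first exact: nonneg_polyX.
  by rewrite comp_polyB comp_polyX comp_polyC map_polyX addrK.
elim: m => [|m IH]; first exact: shift_nonneg1.
rewrite exprS; apply: shift_nonnegM => //.
exists ('X + 1); first by apply: nonneg_polyD; [exact: nonneg_polyX | exact: nonneg_poly1].
by rewrite comp_polyX rmorphD /= map_polyX rmorph1.
Qed.

Section Plethysm.
Variable N : nat.
Local Notation e := (Defs.esym N).

Lemma size_elist r : size (elist N r) = r.+1.
Proof. by elim: r => //= r IH; rewrite size_rcons IH. Qed.

Lemma nth_elist r j : (j <= r)%N -> nth 0 (elist N r) j = e j.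
Proof.
elim: r => [|r IH] le_jr; first by case: j le_jr.
rewrite /= nth_rcons size_elist; case: ltnP => [lt_jr|le_rj]; first exact: IH.
have /eqP -> : j == r.+1 by rewrite eqn_leq le_jr.
by rewrite eqxx /Defs.esym /= nth_rcons size_elist ltnn eqxx.
Qed.

Lemma esymS k : e k.+1 =
  ((k.+1%:R : rat)^-1)%:P *: \sum_(i < k.+1) (-1) ^+ i * e (k - i)%N * psum N i.+1.
Proof.
rewrite {1}/Defs.esym /= nth_rcons size_elist ltnn eqxx; congr (_ *: _).
by apply: eq_bigr => i _; rewrite nth_elist // leq_subr.
Qed.

Lemma esym_newton : newton (psum N) e.
Proof.
move=> k; rewrite /euler_op esymS -mul_mpolyC mulrA -mpolyC_nat -mpolyCM.
by rewrite -polyC_natr -polyCM mulfV ?pnatr_eq0 // mul1r.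
Qed.

Definition polyMC (c : Rq) : {poly Sym N} := c%:MP%:P.
HB.instance Definition _ := GRing.RMorphism.copy polyMC (polyC \o @mpolyC N Rq).

Definition pleth_shift_var (i : 'I_N) : {poly Sym N} :=
  ('X_i : Sym N)%:P + (palpha i.+1)%:MP *: 'X ^+ i.+1.

Lemma pleth_shiftE F : pleth_shift F = mmap polyMC pleth_shift_var F.
Proof. by []. Qed.

HB.instance Definition _ :=
  GRing.RMorphism.copy (@pleth_shift N) (mmap polyMC pleth_shift_var).

Lemma pleth_shiftC c : pleth_shift c%:MP = polyMC c.
Proof. by rewrite pleth_shiftE mmapC. Qed.

Lemma pleth_shift_psum i : (0 < i <= N)%N ->
  pleth_shift (psum N i) = (psum N i)%:P + polyMC (palpha i) * 'X^i.
Proof.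
case: i => // i /= lt_iN; rewrite /psum insubT pleth_shiftE mmapX mmap1U.
by rewrite mul_polyC.
Qed.

Lemma lreg_natr n : GRing.lreg (n.+1%:R : {poly Sym N}).
Proof.
apply/lregP; rewrite -[_%:R](rmorph_nat (polyC \o @mpolyC N Rq \o polyC)) /=.
by rewrite !polyC_eq0 mpolyC_eq0 polyC_eq0 pnatr_eq0.
Qed.

Lemma pleth_shift_esym k : (k <= N)%N -> pleth_shift (e k) =
  conv (fun j => (e j)%:P) (fun m => polyMC (ealpha m) * 'X^m) k.
Proof.
move=> le_kN.
have Nconv := newton_conv (newton_rmorph polyC esym_newton)
  (newton_scale 'X (newton_rmorph polyMC ealpha_newton)).
apply: (newton_uniq lreg_natr _ (newton_rmorph (@pleth_shift N) esym_newton) Nconv _ le_kN).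
  exact: pleth_shift_psum.
by rewrite /= rmorph1 /conv big_ord1 /= rmorph1 !mul1r.
Qed.

End Plethysm.

Section AdditiveSpan.
Variable V : nmodType.
Implicit Types P Q : V -> Prop.

Inductive addspan P : V -> Prop :=
| addspan0 : addspan P 0
| addspan_cons x y : P x -> addspan P y -> addspan P (x + y).

Lemma addspan1 P x : P x -> addspan P x.
Proof. by move=> Px; rewrite -[x]addr0; apply: addspan_cons (addspan0 P). Qed.

Lemma addspanD P x y : addspan P x -> addspan P y -> addspan P (x + y).
Proof.
elim=> [|u v Pu _ IH] Py; first by rewrite add0r.
by rewrite -addrA; apply: addspan_cons (IH Py).
Qed.

Lemma addspan_sum P (I : Type) (r : seq I) (F : I -> V) :
  (forall i, addspan P (F i)) -> addspan P (\sum_(i <- r) F i).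
Proof.
move=> PF; elim: r => [|i r IH]; first by rewrite big_nil; exact: addspan0.
by rewrite big_cons; apply: addspanD.
Qed.

End AdditiveSpan.

Lemma addspan_map (U V : nmodType) (f : {additive V -> U}) P (Q : U -> Prop) x :
  (forall y, P y -> addspan Q (f y)) -> addspan P x -> addspan Q (f x).
Proof.
move=> fPQ; elim=> [|y z Py _ IH]; first by rewrite raddf0; exact: addspan0.
by rewrite raddfD; apply: addspanD; first exact: fPQ.
Qed.

Lemma addspanM (R : pzSemiRingType) (P Q S : R -> Prop) x y :
  (forall x' y', P x' -> Q y' -> S (x' * y')) ->
  addspan P x -> addspan Q y -> addspan S (x * y).
Proof.
move=> PQS; elim=> [|u v Pu _ IH] Qy; first by rewrite mul0r; exact: addspan0.
rewrite mulrDl; apply: addspanD (IH Qy).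
elim: Qy => [|w z Qw _ IHz]; first by rewrite mulr0; exact: addspan0.
by rewrite mulrDr; apply: addspan_cons; first exact: PQS.
Qed.

Lemma leq_sumn_mem k mu : k \in mu -> (k <= sumn mu)%N.
Proof. by move=> kmu; rewrite (perm_sumn (perm_to_rem kmu)) /= leq_addr. Qed.

Section Positivity.
Variable N : nat.
Local Notation e := (Defs.esym N).

Definition e_term n (F : Sym N) : Prop :=
  exists c nu, [/\ shift_nonneg c, sumn nu = n & F = c *: emon N nu].

Definition ew_term n (H : {poly Sym N}) : Prop :=
  exists c nu t,
    [/\ shift_nonneg c, (sumn nu + t)%N = n & H = (c *: emon N nu)%:P * 'X^t].

Lemma ew_termM n m H G : ew_term n H -> ew_term m G -> ew_term (n + m) (H * G).
Proof.
move=> [c [nu [t [c_ge0 <- ->]]]] [c' [nu' [t' [c'_ge0 <- ->]]]].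
exists (c * c'), (nu ++ nu'), (t + t')%N; split; first exact: shift_nonnegM.
  by rewrite sumn_cat; lia.
rewrite /emon big_cat exprD -[c *: _]mul_mpolyC -[c' *: _]mul_mpolyC.
by rewrite -[(c * c') *: _]mul_mpolyC mulrACA -polyCM mpolyCM [in RHS]mulrACA.
Qed.

Lemma ew_term1 : ew_term 0 1.
Proof.
exists 1, [::], 0%N; rewrite /emon big_nil scale1r mulr1.
by split => //; exact: shift_nonneg1.
Qed.

Lemma ew_term_prod mu (G : nat -> {poly Sym N}) :
  (forall k, k \in mu -> addspan (ew_term k) (G k)) ->
  addspan (ew_term (sumn mu)) (\prod_(k <- mu) G k).
Proof.
elim: mu => [|k mu IH] PG; first by rewrite big_nil; apply: addspan1; exact: ew_term1.
rewrite big_cons; apply: (addspanM (@ew_termM _ _)); first by apply: PG; exact: mem_head.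
by apply: IH => j jmu; apply: PG; rewrite inE jmu orbT.
Qed.

Lemma ew_term_pleth_esym k : (k <= N)%N -> addspan (ew_term k) (pleth_shift (e k)).
Proof.
move=> le_kN; rewrite pleth_shift_esym //; apply: addspan_sum => m; apply: addspan1.
exists (ealpha m), [:: (k - m)%N], m; split; first exact: shift_nonneg_ealpha.
  by have := ltn_ord m; rewrite /= addn0; lia.
by rewrite /emon big_seq1 -mul_mpolyC /polyMC polyCM mulrA [(e _)%:P * _]mulrC.
Qed.

Lemma ew_term_pleth n F :
  (n <= N)%N -> addspan (e_term n) F -> addspan (ew_term n) (pleth_shift F).
Proof.
move=> le_nN; apply: addspan_map => _ [c [nu [c_ge0 nu_n ->]]].
rewrite -nu_n /= -mul_mpolyC rmorphM /= pleth_shiftC /emon rmorph_prod /= -[sumn nu]add0n.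
apply: (addspanM (@ew_termM _ _)).
  apply: addspan1; exists c, [::], 0%N; split => //.
  by rewrite /emon big_nil expr0 mulr1 /polyMC -mul_mpolyC mulr1.
apply: ew_term_prod => k knu; apply: ew_term_pleth_esym.
by rewrite (leq_trans (leq_sumn_mem knu)) ?nu_n.
Qed.

Definition e_pairing a M (H : {poly Sym N}) : Sym N := \sum_(j < M) H`_j * e (a + j).

Lemma e_pairing_is_nmod_morphism a M : nmod_morphism (e_pairing a M).
Proof.
split=> [|H G]; first by apply: big1 => j _; rewrite coef0 mul0r.
by rewrite /e_pairing -big_split; apply: eq_bigr => j _; rewrite coefD mulrDl.
Qed.

HB.instance Definition _ a M :=
  GRing.isNmodMorphism.Build _ _ (e_pairing a M) (e_pairing_is_nmod_morphism a M).

Lemma e_term_pairing a M n H :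
  addspan (ew_term n) H -> addspan (e_term (n + a)) (e_pairing a M H).
Proof.
apply: addspan_map => _ [c [nu [t [c_ge0 <- ->]]]].
rewrite /= /e_pairing.
under eq_bigr => j _ do
  rewrite coefCM coefXn mulr_natr mulrb (fun_if (fun z => z * e (a + j))) mul0r.
rewrite -big_mkcond /= (big_ord1_eq _ (fun j => c *: emon N nu * e (a + j))).
case: ifP => _; last exact: addspan0.
apply: addspan1; exists c, ((a + t)%N :: nu); split => //; first by rewrite /=; lia.
by rewrite /emon big_cons -scalerAl mulrC.
Qed.

Lemma e_term_Bop a n F : (n <= N)%N ->
  addspan (e_term n) F -> addspan (e_term (n + a)) (Bop a F).
Proof. by move=> le_nN /(ew_term_pleth le_nN); apply: e_term_pairing. Qed.

Lemma e_term_Bcomp p : (sumn p <= N)%N -> addspan (e_term (sumn p)) (Bcomp N p).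
Proof.
elim: p => [|a p IH] /= le_pN.
  apply: addspan1; exists 1, [::]; split => //; first exact: shift_nonneg1.
  by rewrite /emon big_nil scale1r.
rewrite addnC; apply: e_term_Bop; first by lia.
by apply: IH; lia.
Qed.

End Positivity.

HB.instance Definition _ N :=
  GRing.RMorphism.copy (@shift_q N) (map_mpoly (comp_poly ('X + 1))).

Lemma shift_qZ N c (F : Sym N) : shift_q (c *: F) = (c \Po ('X + 1)) *: shift_q F.
Proof. exact: map_mpolyZ. Qed.

Lemma shift_q_esym N k : shift_q (Defs.esym N k) = Defs.esym N k.
Proof.
elim/ltn_ind: k => -[|k] IH; first exact: rmorph1.
rewrite esymS shift_qZ rmorph_sum comp_polyC; congr (_ *: _).
apply: eq_bigr => i _; rewrite !rmorphM rmorphXn rmorphN1 /= IH ?ltnS ?leq_subr //.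
congr (_ * _); rewrite /psum; case: insub => [j|]; [exact: map_mpolyX | exact: rmorph0].
Qed.

Lemma shift_q_emon N mu : shift_q (emon N mu) = emon N mu.
Proof. by rewrite rmorph_prod; apply: eq_bigr => k _; apply: shift_q_esym. Qed.

Definition partition_of (nu : seq nat) : seq nat := sort geq [seq x <- nu | (0 < x)%N].

Lemma is_partition_of n nu : sumn nu = n -> is_partition n (partition_of nu).
Proof.
move=> <-; rewrite /is_partition /partition_of (perm_sumn (permEl (perm_sort _ _))).
rewrite sort_sorted ?all_sort ?filter_all ?andbT; last by move=> x y; apply: leq_total.
by elim: nu => //= -[|x] nu /eqP IH; rewrite /= IH.
Qed.

Lemma emon_partition_of N nu : emon N (partition_of nu) = emon N nu.
Proof.
rewrite /emon /partition_of (perm_big _ (permEl (perm_sort _ _))) big_filter.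
by rewrite big_mkcond; apply: eq_bigr => -[|k].
Qed.

Lemma shift_q_e_span N n (F : Sym N) : addspan (e_term n) F ->
  exists s : seq (seq nat * {poly int}),
    all (fun x => is_partition n x.1) s /\
    (forall x, x \in s -> nonneg_poly x.2) /\
    shift_q F = \sum_(x <- s) (map_poly intr x.2 : Rq) *: emon N x.1.
Proof.
elim=> [|_ G [c [nu [[P P_ge0 eP] nu_n ->]]] _ [s [part_s [nonneg_s shift_G]]]].
  by exists [::]; rewrite big_nil rmorph0.
exists ((partition_of nu, P) :: s); split; first by rewrite /= is_partition_of.
split; first by move=> x /predU1P [-> // | /nonneg_s].
by rewrite big_cons rmorphD /= shift_G shift_qZ eP shift_q_emon emon_partition_of.
Qed.

Theorem theorem2p1 (p : seq nat) (hp : all (fun a : nat => (0 < a)%N) p) :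
  exists s : seq (seq nat * {poly int}),
    all (fun x => is_partition (sumn p) x.1) s /\
    (forall x, x \in s -> nonneg_poly x.2) /\
    shift_q (Bcomp (sumn p) p) =
      \sum_(x <- s) (map_poly intr x.2 : Rq) *: emon (sumn p) x.1.
Proof.
exact: shift_q_e_span (e_term_Bcomp (leqnn (sumn p))).
Qed.
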